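(* Let $K$ be a field of characteristic $0$, let $L=\mathcal{L}(x,y)$ be the free Lie algebra over $K$ freely generated by $x,y$, let $\delta$ be the derivation of $L$ with $\delta(x)=0$, $\delta(y)=x$, and $L^\delta=\ker\delta$. Every element of $L^\delta$ of degree at most $7$ belongs to the Lie subalgebra of $L$ generated by $x$, $[y,x]$ and $[[y,x,y],[y,x,x]]$.
   Context: Brackets are left-normed: $[a_1,a_2,\ldots,a_n]=[[\ldots[a_1,a_2],\ldots],a_n]$. *)

From HB Require Import structures.
From mathcomp Require Import all_boot all_order all_algebra.
Set Implicit Arguments. Unset Strict Implicit. Unset Printing Implicit Defensive.
Import Order.TTheory GRing.Theory Num.Theory.
Local Open Scope ring_scope.

(* Model of the free associative algebra K<<x,y>> (noncommutative formal power
   series; words over the alphabet {x,y} are [seq bool], x = false, y = true).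
   The free Lie algebra L(x,y) is realised, as usual, as the Lie subalgebra of
   this associative algebra (commutator bracket) generated by x and y. *)
Section FreeAlg.
Variable K : fieldType.

Definition word := seq bool.
Definition series := word -> K.

Definition lx : series := fun w => if w == [:: false] then 1 else 0.
Definition ly : series := fun w => if w == [:: true] then 1 else 0.

Definition sadd (f g : series) : series := fun w => f w + g w.
Definition sscale (c : K) (f : series) : series := fun w => c * f w.
Definition szero : series := fun _ => 0.
Definition smul (f g : series) : series :=
  fun w => \sum_(i < (size w).+1) f (take i w) * g (drop i w).
Definition lbr (f g : series) : series :=
  fun w => smul f g w - smul g f w.

Inductive lie_gen (S : series -> Prop) : series -> Prop :=
| lie_gen_in f : S f -> lie_gen S f
| lie_gen_zero : lie_gen S szero
| lie_gen_add f g : lie_gen S f -> lie_gen S g -> lie_gen S (sadd f g)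
| lie_gen_scale c f : lie_gen S f -> lie_gen S (sscale c f)
| lie_gen_br f g : lie_gen S f -> lie_gen S g -> lie_gen S (lbr f g).

Definition freeLie : series -> Prop := lie_gen (fun f => f = lx \/ f = ly).

(* The derivation delta with delta(x) = 0, delta(y) = x (extended to K<<x,y>>):
   the coefficient of w in delta f is the sum, over positions i of w carrying
   the letter x, of the coefficient in f of w with that letter replaced by y. *)
Definition delta (f : series) : series :=
  fun w => \sum_(i < size w | nth true w i == false) f (set_nth false w i true).

Definition deg_le (n : nat) (f : series) : Prop :=
  forall w : word, (n < size w)%N -> f w = 0.

End FreeAlg.

From Stdlib Require Import ZArith FunctionalExtensionality.
From mathcomp Require Import all_boot all_order all_algebra ssrZ ring.
Set Implicit Arguments.
Unset Strict Implicit.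
Unset Printing Implicit Defensive.
Import GRing.Theory ssrZ.Instances.
Local Open Scope ring_scope.

(* The free Lie algebra on x, y is spanned by x, y and the left-normed brackets
   [x, y, a_3, ..., a_n]: by the Jacobi identity a bracket of left-normed brackets
   is a combination of left-normed ones, [y, x, ...] = - [x, y, ...] and
   [a, a, ...] = 0.  There are fourteen Lie monomials t_m in x, [y, x] and
   [[y,x,y],[y,x,x]], left-normed brackets g_j, and linear forms lambda_m, mu_j
   (each a combination of finitely many coefficients of a series) such that
       60 f = sum_m lambda_m(f) t_m + sum_j mu_j(delta f) g_j
   on all words of length at most 7, for every f in L.  Both sides are linear
   and preserve homogeneity, so the identity is checked by an integer computation
   on the spanning brackets of degree at most 7; in higher degree both sides
   vanish on short words.  When delta f = 0 the second sum disappears, and 60 is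
   invertible in characteristic 0. *)

Section SeriesAlgebra.
Variable K : fieldType.
Implicit Types (f g h : series K) (c : K) (w : word).

Lemma smulDl f g h w : smul (sadd f g) h w = smul f h w + smul g h w.
Proof. by rewrite /smul -big_split; apply: eq_bigr => i _; rewrite mulrDl. Qed.

Lemma smulDr f g h w : smul f (sadd g h) w = smul f g w + smul f h w.
Proof. by rewrite /smul -big_split; apply: eq_bigr => i _; rewrite mulrDr. Qed.

Lemma smulBl f g h w : smul (fun u => f u - g u) h w = smul f h w - smul g h w.
Proof. by rewrite /smul -sumrB; apply: eq_bigr => i _; rewrite mulrBl. Qed.

Lemma smulBr f g h w : smul f (fun u => g u - h u) w = smul f g w - smul f h w.
Proof. by rewrite /smul -sumrB; apply: eq_bigr => i _; rewrite mulrBr. Qed.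

Lemma smulZl c f g w : smul (sscale c f) g w = c * smul f g w.
Proof. by rewrite /smul mulr_sumr; apply: eq_bigr => i _; rewrite mulrA. Qed.

Lemma smulZr c f g w : smul f (sscale c g) w = c * smul f g w.
Proof. by rewrite /smul mulr_sumr; apply: eq_bigr => i _; rewrite mulrCA. Qed.

Lemma smul0l f w : smul (szero K) f w = 0.
Proof. by rewrite /smul big1 // => i _; rewrite mul0r. Qed.

Lemma smul0r f w : smul f (szero K) w = 0.
Proof. by rewrite /smul big1 // => i _; rewrite mulr0. Qed.

Lemma smul_nil f g : smul f g [::] = f [::] * g [::].
Proof. by rewrite /smul big_ord1. Qed.

Lemma smul_cons f g a w :
  smul f g (a :: w) = f [::] * g (a :: w) + smul (fun u => f (a :: u)) g w.
Proof. by rewrite /smul big_ord_recl. Qed.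

Lemma smulA f g h w : smul f (smul g h) w = smul (smul f g) h w.
Proof.
elim: w f => [|a w IH] f; first by rewrite !smul_nil mulrA.
rewrite !smul_cons IH.
have -> : (fun u => smul f g (a :: u)) =
          sadd (sscale (f [::]) (fun u => g (a :: u))) (smul (fun u => f (a :: u)) g).
  by apply: functional_extensionality => u; rewrite smul_cons.
by rewrite smulDl smulZl smul_nil; ring.
Qed.

Lemma lbr_jacobi f g h :
  lbr f (lbr g h) = sadd (lbr (lbr f g) h) (sscale (-1) (lbr (lbr f h) g)).
Proof.
apply: functional_extensionality => w.
by rewrite /sadd /sscale /lbr /= !smulBl !smulBr !smulA; ring.
Qed.

Lemma lbrxx f : lbr f f = szero K.
Proof. by apply: functional_extensionality => w; rewrite /lbr subrr. Qed.

Lemma lbrC f g : lbr g f = sscale (-1) (lbr f g).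
Proof. by apply: functional_extensionality => w; rewrite /lbr /sscale; ring. Qed.

Lemma lbr0l g : lbr (szero K) g = szero K.
Proof. by apply: functional_extensionality => w; rewrite /lbr smul0l smul0r subrr. Qed.

Lemma lbr0r f : lbr f (szero K) = szero K.
Proof. by apply: functional_extensionality => w; rewrite /lbr smul0l smul0r subrr. Qed.

Lemma lbrDl f g h : lbr (sadd f g) h = sadd (lbr f h) (lbr g h).
Proof.
by apply: functional_extensionality => w; rewrite /lbr smulDl smulDr /sadd; ring.
Qed.

Lemma lbrDr f g h : lbr f (sadd g h) = sadd (lbr f g) (lbr f h).
Proof.
by apply: functional_extensionality => w; rewrite /lbr smulDl smulDr /sadd; ring.
Qed.

Lemma lbrZl c f g : lbr (sscale c f) g = sscale c (lbr f g).
Proof.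
by apply: functional_extensionality => w; rewrite /lbr smulZl smulZr /sscale; ring.
Qed.

Lemma lbrZr c f g : lbr f (sscale c g) = sscale c (lbr f g).
Proof.
by apply: functional_extensionality => w; rewrite /lbr smulZl smulZr /sscale; ring.
Qed.

Lemma lie_gen_sum (S : series K -> Prop) I (r : seq I) (a : I -> K) (g : I -> series K) :
  (forall i, lie_gen S (g i)) -> lie_gen S (fun w => \sum_(i <- r) a i * g i w).
Proof.
move=> Sg; elim: r => [|i r IH].
  have -> : (fun w => \sum_(i <- [::]) a i * g i w) = szero K.
    by apply: functional_extensionality => w; rewrite big_nil.
  exact: lie_gen_zero.
have -> : (fun w => \sum_(j <- i :: r) a j * g j w) =
          sadd (sscale (a i) (g i)) (fun w => \sum_(j <- r) a j * g j w).
  by apply: functional_extensionality => w; rewrite big_cons.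
by apply: lie_gen_add => //; apply: lie_gen_scale.
Qed.

End SeriesAlgebra.

Section LeftNormedSpan.
Variables (K : fieldType) (S : series K -> Prop).

Inductive lin_span (T : series K -> Prop) : series K -> Prop :=
| span_gen f : T f -> lin_span T f
| span_zero : lin_span T (szero K)
| span_add f g : lin_span T f -> lin_span T g -> lin_span T (sadd f g)
| span_scale c f : lin_span T f -> lin_span T (sscale c f).

Inductive left_normed : series K -> Prop :=
| left_normed_gen g : S g -> left_normed g
| left_normed_br f g : left_normed f -> S g -> left_normed (lbr f g).

Local Notation span_ln := (lin_span left_normed).

Lemma span_ln_lbr_gen f g : span_ln f -> S g -> span_ln (lbr f g).
Proof.
move=> + Sg; elim=> {f} [f lnf | | f1 f2 _ IH1 _ IH2 | c f _ IH].
- exact/span_gen/left_normed_br.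
- by rewrite lbr0l; apply: span_zero.
- by rewrite lbrDl; apply: span_add.
- by rewrite lbrZl; apply: span_scale.
Qed.

Lemma span_ln_lbr_left_normed f g : left_normed g -> span_ln f -> span_ln (lbr f g).
Proof.
move=> lng; elim: lng f => {g} [g Sg | P h _ IH Sh] f spf.
  exact: span_ln_lbr_gen.
rewrite lbr_jacobi; apply: span_add; first exact/span_ln_lbr_gen/Sh/IH.
exact/span_scale/IH/span_ln_lbr_gen.
Qed.

Lemma span_ln_lbr f g : span_ln f -> span_ln g -> span_ln (lbr f g).
Proof.
move=> spf; elim=> {g} [g lng | | g1 g2 _ IH1 _ IH2 | c g _ IH].
- exact: span_ln_lbr_left_normed.
- by rewrite lbr0r; apply: span_zero.
- by rewrite lbrDr; apply: span_add.
- by rewrite lbrZr; apply: span_scale.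
Qed.

Lemma lie_gen_span_left_normed f : lie_gen S f -> span_ln f.
Proof.
elim=> {f} [f Sf | | f g _ IHf _ IHg | c f _ IH | f g _ IHf _ IHg].
- exact/span_gen/left_normed_gen.
- exact: span_zero.
- exact: span_add.
- exact: span_scale.
- exact: span_ln_lbr.
Qed.

End LeftNormedSpan.

Inductive term (A : Type) : Type := Var of A | Br of term A & term A.
Arguments Var {A}.
Arguments Br {A}.

Fixpoint term_deg A (t : term A) : nat :=
  if t is Br t1 t2 then (term_deg t1 + term_deg t2)%N else 1%N.

Fixpoint term_subst A B (s : A -> term B) (t : term A) : term B :=
  match t with Var a => s a | Br t1 t2 => Br (term_subst s t1) (term_subst s t2) end.

Definition left_normed_term (a : bool) (u : word) : term bool :=
  foldl (fun t b => Br t (Var b)) (Var a) u.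

Lemma term_deg_left_normed a u : term_deg (left_normed_term a u) = (size u).+1.
Proof.
elim/last_ind: u => [|u b IH] //.
by rewrite /left_normed_term foldl_rcons /= -/(left_normed_term a u) IH size_rcons addn1.
Qed.

(* Coefficients are computed in the binary integers, for [vm_compute]. *)
Definition zsum (s : seq Z) : Z := foldr +%R 0 s.

(* Since [eval_term letter t] is homogeneous of degree [term_deg t], a Cauchy
   product of two such series has a single nonzero splitting of each word. *)
Fixpoint term_coef (t : term bool) (w : word) : Z :=
  match t with
  | Var b => if w == [:: b] then 1 else 0
  | Br t1 t2 =>
      if size w == (term_deg t1 + term_deg t2)%N then
        term_coef t1 (take (term_deg t1) w) * term_coef t2 (drop (term_deg t1) w)
        - term_coef t2 (take (term_deg t2) w) * term_coef t1 (drop (term_deg t2) w)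
      else 0
  end.

Definition term_dcoef (t : term bool) (w : word) : Z :=
  zsum [seq term_coef t (set_nth false w i true) | i <- iota 0 (size w) & nth true w i == false].

Fixpoint words (n : nat) : seq word :=
  if n is n'.+1 then [seq b :: w | b <- [:: false; true], w <- words n'] else [:: [::]].

Definition words_upto (n : nat) : seq word := flatten [seq words k | k <- iota 0 n.+1].

Lemma mem_words w : w \in words (size w).
Proof. by elim: w => [|[] w IH] //=; rewrite !mem_cat (map_f _ IH) ?orbT. Qed.

Lemma mem_words_upto n w : (size w <= n)%N -> w \in words_upto n.
Proof.
move=> le_wn; apply/flattenP; exists (words (size w)); last exact: mem_words.
by apply/mapP; exists (size w); rewrite // mem_iota add0n ltnS.
Qed.

Section Evaluation.
Variable K : fieldType.
Implicit Types (f g : series K) (w : word).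

Definition letter (b : bool) : series K := if b then ly K else lx K.

Fixpoint eval_term A (v : A -> series K) (t : term A) : series K :=
  match t with Var a => v a | Br t1 t2 => lbr (eval_term v t1) (eval_term v t2) end.

Lemma lie_gen_eval_term (S : series K -> Prop) A (v : A -> series K) t :
  (forall a, S (v a)) -> lie_gen S (eval_term v t).
Proof.
move=> Sv; elim: t => [a | t1 IH1 t2 IH2] /=; first exact: lie_gen_in.
exact: lie_gen_br.
Qed.

Lemma eval_term_subst A B (v : B -> series K) (s : A -> term B) t :
  eval_term v (term_subst s t) = eval_term (fun a => eval_term v (s a)) t.
Proof. by elim: t => [a | t1 IH1 t2 IH2] //=; rewrite IH1 IH2. Qed.

Definition lbr_word f (u : word) : series K := foldl (fun g b => lbr g (letter b)) f u.

Lemma eval_left_normed_term a u :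
  eval_term letter (left_normed_term a u) = lbr_word (letter a) u.
Proof.
rewrite /left_normed_term /lbr_word -[letter a]/(eval_term letter (Var a)).
by elim: u (Var a) => [|b u IH] t //=; rewrite IH.
Qed.

Lemma lbr_wordZ c f u : lbr_word (sscale c f) u = sscale c (lbr_word f u).
Proof. by rewrite /lbr_word; elim: u f => [|b u IH] f //=; rewrite lbrZl IH. Qed.

Lemma lbr_word0 u : lbr_word (szero K) u = szero K.
Proof. by rewrite /lbr_word; elim: u => [|b u IH] //=; rewrite lbr0l. Qed.

Lemma left_normed_letters f :
  left_normed (fun g => g = lx K \/ g = ly K) f -> exists a u, f = lbr_word (letter a) u.
Proof.
elim=> {f} [g [->|->] | f g _ [a [u ->]] [->|->]].
- by exists false, [::].
- by exists true, [::].
- by exists a, (rcons u false); rewrite /lbr_word foldl_rcons.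
- by exists a, (rcons u true); rewrite /lbr_word foldl_rcons.
Qed.

Definition homogeneous (n : nat) f := forall w, size w != n -> f w = 0.

Lemma smul_homogeneousE m n f g : homogeneous m f -> homogeneous n g ->
  forall w, smul f g w = if size w == (m + n)%N then f (take m w) * g (drop m w) else 0.
Proof.
move=> hf hg w; rewrite /smul.
have size_take_drop i : (size (take i w) + size (drop i w))%N = size w.
  by rewrite -size_cat cat_take_drop.
case: eqP => [sw | sw].
- have lt_m : (m < (size w).+1)%N by rewrite sw ltnS leq_addr.
  rewrite (bigD1 (Ordinal lt_m)) //= big1 ?addr0 // => i /eqP ne_im.
  have size_i : size (take i w) = i by rewrite size_takel // -ltnS.
  rewrite hf ?mul0r // size_i; apply/eqP => eq_im; apply: ne_im; exact: val_inj.
- rewrite big1 // => i _.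
  have [szt | /hf -> ] := eqVneq (size (take i w)) m; last by rewrite mul0r.
  have [szd | /hg -> ] := eqVneq (size (drop i w)) n; last by rewrite mulr0.
  by exfalso; apply: sw; rewrite -(size_take_drop i) szt szd.
Qed.

Lemma eval_term_homogeneous t : homogeneous (term_deg t) (eval_term letter t).
Proof.
elim: t => [[] | t1 IH1 t2 IH2] w /= sw.
- by rewrite /ly; case: eqP => // wE; rewrite wE in sw.
- by rewrite /lx; case: eqP => // wE; rewrite wE in sw.
rewrite /lbr (smul_homogeneousE IH1 IH2) (smul_homogeneousE IH2 IH1).
rewrite [(term_deg t2 + _)%N]addnC.
by rewrite (negbTE sw) subrr.
Qed.

Definition ofZ (z : Z) : K := (int_of_Z z)%:~R.

Lemma ofZ0 : ofZ 0 = 0. Proof. by []. Qed.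

Lemma ofZD a b : ofZ (a + b) = ofZ a + ofZ b.
Proof. by rewrite /ofZ rmorphD intrD. Qed.

Lemma ofZB a b : ofZ (a - b) = ofZ a - ofZ b.
Proof. by rewrite /ofZ rmorphB intrB. Qed.

Lemma ofZM a b : ofZ (a * b) = ofZ a * ofZ b.
Proof. by rewrite /ofZ rmorphM intrM. Qed.

Lemma ofZ_sum I (r : seq I) (F : I -> Z) : ofZ (\sum_(i <- r) F i) = \sum_(i <- r) ofZ (F i).
Proof. exact: (big_morph _ ofZD ofZ0). Qed.

Lemma eval_term_coef t w : eval_term letter t w = ofZ (term_coef t w).
Proof.
elim: t w => [[] | t1 IH1 t2 IH2] w /=.
- by rewrite /ly; case: (w == _).
- by rewrite /lx; case: (w == _).
rewrite /lbr (smul_homogeneousE (@eval_term_homogeneous t1) (@eval_term_homogeneous t2)).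
rewrite (smul_homogeneousE (@eval_term_homogeneous t2) (@eval_term_homogeneous t1)).
rewrite [(term_deg t2 + _)%N]addnC.
case: (size w == _); last by rewrite subrr.
by rewrite !IH1 !IH2 ofZB !ofZM.
Qed.

Lemma deltaD f g : delta (sadd f g) = sadd (delta f) (delta g).
Proof. by apply: functional_extensionality => w; apply: big_split. Qed.

Lemma deltaZ c f : delta (sscale c f) = sscale c (delta f).
Proof. by apply: functional_extensionality => w; rewrite /delta /sscale mulr_sumr. Qed.

Lemma delta0 : delta (szero K) = szero K.
Proof. by apply: functional_extensionality => w; apply: big1. Qed.

Lemma delta_homogeneous n f : homogeneous n f -> homogeneous n (delta f).
Proof.
move=> hf w sw; rewrite /delta big1 // => i _; apply: hf.
by rewrite size_set_nth (maxn_idPr (ltn_ord i)).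
Qed.

Lemma zsumE s : zsum s = \sum_(x <- s) x.
Proof. exact: foldrE. Qed.

Lemma delta_eval_term t w : delta (eval_term letter t) w = ofZ (term_dcoef t w).
Proof.
rewrite /delta /term_dcoef zsumE ofZ_sum big_map big_filter.
rewrite -(big_mkord (fun i => nth true w i == false)
            (fun i => eval_term letter t (set_nth false w i true))).
rewrite /index_iota subn0; apply: eq_bigr => i _; exact: eval_term_coef.
Qed.

End Evaluation.

Arguments letter {K} b.

Inductive gen := Gx | Gu | Gw.

Definition gen_term (g : gen) : term bool :=
  match g with
  | Gx => Var false
  | Gu => Br (Var true) (Var false)
  | Gw => Br (Br (Br (Var true) (Var false)) (Var true))
             (Br (Br (Var true) (Var false)) (Var false))
  end.

Definition target_term (t : term gen) : term bool := term_subst gen_term t.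

Section CertificateData.
Local Open Scope Z_scope.

(* [targets] lists the pairs (t_m, lambda_m) and [corrections] the pairs
   (g_j, mu_j).  The t_m form a basis of ker delta in degrees at most 7 and the
   g_j complete it to a basis of L(x, y) in these degrees; the lambda_m and mu_j
   are the bases dual to (t_m, g_j) and to (delta g_j), scaled by [cert_denom]
   to clear denominators. *)
Definition cert_denom : Z := 60.

Definition targets : seq (term gen * seq (word * Z)) := [::
  (Var Gx,
     [:: ([:: false], 60)]);
  (Var Gu,
     [:: ([:: false; true], -60)]);
  (Br (Var Gx) (Var Gu),
     [:: ([:: false; false; true], -60)]);
  (Br (Var Gx) (Br (Var Gx) (Var Gu)),
     [:: ([:: false; false; false; true], -60)]);
  (Br (Var Gx) (Br (Var Gx) (Br (Var Gx) (Var Gu))),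
     [:: ([:: false; false; false; false; true], -60)]);
  (Br (Var Gu) (Br (Var Gx) (Var Gu)),
     [:: ([:: false; false; false; true; true], -180); ([:: false; false; true; false; true], -60)]);
  (Var Gw,
     [:: ([:: false; false; false; true; true; true], -180); ([:: false; false; true; false; true; true], -60); ([:: false; false; true; true; false; true], -60)]);
  (Br (Var Gx) (Br (Var Gx) (Br (Var Gx) (Br (Var Gx) (Var Gu)))),
     [:: ([:: false; false; false; false; false; true], -60)]);
  (Br (Var Gx) (Br (Var Gu) (Br (Var Gx) (Var Gu))),
     [:: ([:: false; false; false; false; true; true], -240); ([:: false; false; false; true; false; true], -60)]);
  (Br (Var Gx) (Var Gw),
     [:: ([:: false; false; false; false; true; true; true], 360); ([:: false; false; false; true; false; true; true], 180); ([:: false; false; true; false; false; true; true], 60)]);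
  (Br (Var Gx) (Br (Var Gx) (Br (Var Gx) (Br (Var Gx) (Br (Var Gx) (Var Gu))))),
     [:: ([:: false; false; false; false; false; false; true], -60)]);
  (Br (Var Gx) (Br (Var Gx) (Br (Var Gu) (Br (Var Gx) (Var Gu)))),
     [:: ([:: false; false; false; false; false; true; true], -600); ([:: false; false; false; false; true; false; true], -240); ([:: false; false; false; true; false; false; true], -60)]);
  (Br (Var Gu) (Br (Var Gx) (Br (Var Gx) (Br (Var Gx) (Var Gu)))),
     [:: ([:: false; false; false; false; false; true; true], 300); ([:: false; false; false; false; true; false; true], 180); ([:: false; false; false; true; false; false; true], 60)]);
  (Br (Var Gu) (Br (Var Gu) (Br (Var Gx) (Var Gu))),
     [:: ([:: false; false; false; false; true; true; true], -720); ([:: false; false; false; true; false; true; true], -360); ([:: false; false; false; true; true; false; true], -180); ([:: false; false; true; false; false; true; true], -120); ([:: false; false; true; false; true; false; true], -60)])].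

Definition corrections : seq (term bool * seq (word * Z)) := [::
  (left_normed_term true [:: ],
     [:: ([:: false], 60)]);
  (left_normed_term false [:: true; true],
     [:: ([:: false; false; true], -60)]);
  (left_normed_term false [:: true; false; true],
     [:: ([:: false; false; false; true], 60)]);
  (left_normed_term false [:: true; true; true],
     [:: ([:: false; false; true; true], -30)]);
  (left_normed_term false [:: true; false; false; true],
     [:: ([:: false; false; false; false; true], -60)]);
  (left_normed_term false [:: true; false; true; true],
     [:: ([:: false; false; false; true; true], -120); ([:: false; false; true; false; true], -60)]);
  (left_normed_term false [:: true; true; true; false],
     [:: ([:: false; false; false; true; true], 150); ([:: false; false; true; false; true], 60)]);
  (left_normed_term false [:: true; true; true; true],
     [:: ([:: false; false; true; true; true], -20)]);
  (left_normed_term false [:: true; false; false; false; true],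
     [:: ([:: false; false; false; false; false; true], 60)]);
  (left_normed_term false [:: true; false; false; true; true],
     [:: ([:: false; false; false; false; true; true], 180); ([:: false; false; false; true; false; true], 60)]);
  (left_normed_term false [:: true; false; true; false; true],
     [:: ([:: false; false; false; false; true; true], -210); ([:: false; false; false; true; false; true], -60)]);
  (left_normed_term false [:: true; false; true; true; true],
     [:: ([:: false; false; false; true; true; true], 10); ([:: false; false; true; true; false; true], -30)]);
  (left_normed_term false [:: true; true; true; false; true],
     [:: ([:: false; false; false; true; true; true], 10); ([:: false; false; true; true; false; true], 30)]);
  (left_normed_term false [:: true; true; true; true; true],
     [:: ([:: false; false; true; true; true; true], -15)]);
  (left_normed_term false [:: true; false; false; false; false; true],
     [:: ([:: false; false; false; false; false; false; true], -60)]);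
  (left_normed_term false [:: true; false; false; false; true; true],
     [:: ([:: false; false; false; false; false; true; true], -570); ([:: false; false; false; false; true; false; true], -240); ([:: false; false; false; true; false; false; true], -60)]);
  (left_normed_term false [:: true; false; false; true; false; true],
     [:: ([:: false; false; false; false; false; true; true], 930); ([:: false; false; false; false; true; false; true], 420); ([:: false; false; false; true; false; false; true], 120)]);
  (left_normed_term false [:: true; false; false; true; true; false],
     [:: ([:: false; false; false; false; false; true; true], -330); ([:: false; false; false; false; true; false; true], -180); ([:: false; false; false; true; false; false; true], -60)]);
  (left_normed_term false [:: true; false; false; true; true; true],
     [:: ([:: false; false; false; false; true; true; true], 770); ([:: false; false; false; true; false; true; true], 420); ([:: false; false; false; true; true; false; true], 150); ([:: false; false; true; false; false; true; true], 150); ([:: false; false; true; false; true; false; true], 60)]);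
  (left_normed_term false [:: true; false; true; false; true; true],
     [:: ([:: false; false; false; false; true; true; true], -2170); ([:: false; false; false; true; false; true; true], -1200); ([:: false; false; false; true; true; false; true], -450); ([:: false; false; true; false; false; true; true], -450); ([:: false; false; true; false; true; false; true], -180)]);
  (left_normed_term false [:: true; false; true; true; false; true],
     [:: ([:: false; false; false; false; true; true; true], 1670); ([:: false; false; false; true; false; true; true], 900); ([:: false; false; false; true; true; false; true], 330); ([:: false; false; true; false; false; true; true], 330); ([:: false; false; true; false; true; false; true], 120)]);
  (left_normed_term false [:: true; false; true; true; true; false],
     [:: ([:: false; false; false; false; true; true; true], 220); ([:: false; false; false; true; false; true; true], 180); ([:: false; false; false; true; true; false; true], 120); ([:: false; false; true; false; false; true; true], 90); ([:: false; false; true; false; true; false; true], 60)]);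
  (left_normed_term false [:: true; false; true; true; true; true],
     [:: ([:: false; false; false; true; true; true; true], -25); ([:: false; false; true; false; true; true; true], -20); ([:: false; false; true; true; true; false; true], 20)]);
  (left_normed_term false [:: true; true; true; false; true; false],
     [:: ([:: false; false; false; false; true; true; true], -510); ([:: false; false; false; true; false; true; true], -300); ([:: false; false; false; true; true; false; true], -150); ([:: false; false; true; false; false; true; true], -120); ([:: false; false; true; false; true; false; true], -60)]);
  (left_normed_term false [:: true; true; true; false; true; true],
     [:: ([:: false; false; false; true; true; true; true], 215); ([:: false; false; true; false; true; true; true], 100); ([:: false; false; true; true; true; false; true], -40)]);
  (left_normed_term false [:: true; true; true; true; true; false],
     [:: ([:: false; false; false; true; true; true; true], -175); ([:: false; false; true; false; true; true; true], -80); ([:: false; false; true; true; true; false; true], 20)]);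
  (left_normed_term false [:: true; true; true; true; true; true],
     [:: ([:: false; false; true; true; true; true; true], -12)])].

End CertificateData.

Definition zfunctional (c : seq (word * Z)) (F : word -> Z) : Z :=
  zsum [seq p.2 * F p.1 | p <- c].

Definition zcert_terms (t : term bool) : seq (Z * term bool) :=
  [seq (zfunctional l.2 (term_coef t), target_term l.1) | l <- targets]
  ++ [seq (zfunctional c.2 (term_dcoef t), c.1) | c <- corrections].

Definition zcertified (t : term bool) : bool :=
  let r := zcert_terms t in
  all (fun w => cert_denom * term_coef t w == zsum [seq p.1 * term_coef p.2 w | p <- r])
    (words (term_deg t)).

Lemma zcertified_spanning_terms :
  [&& zcertified (Var false), zcertified (Var true)
    & all (fun u => zcertified (left_normed_term false (true :: u))) (words_upto 5)].
Proof. vm_compute. reflexivity. Qed.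

Lemma targets_deg : all (fun l => (term_deg (target_term l.1) <= 7)%N) targets.
Proof. by []. Qed.

Lemma targets_homogeneous :
  all (fun l => all (fun p => size p.1 == term_deg (target_term l.1)) l.2) targets.
Proof. by []. Qed.

Lemma corrections_homogeneous :
  all (fun c => all (fun p => size p.1 == term_deg c.1) c.2) corrections.
Proof. by []. Qed.

Lemma big1_all (R : nmodType) I (P : pred I) (F : I -> R) r :
  all P r -> (forall i, P i -> F i = 0) -> \sum_(i <- r) F i = 0.
Proof.
move=> + F0; elim: r => [|i r IH] /=; first by rewrite big_nil.
by case/andP=> Pi Pr; rewrite big_cons F0 // IH // addr0.
Qed.

Section Certificate.
Variable K : fieldType.
Implicit Types (f g : series K) (w : word).

Definition functional (c : seq (word * Z)) f : K := \sum_(p <- c) ofZ K p.2 * f p.1.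

Definition cert_rhs f w : K :=
  \sum_(l <- targets) functional l.2 f * eval_term letter (target_term l.1) w
  + \sum_(c <- corrections) functional c.2 (delta f) * eval_term letter c.1 w.

Definition certified f := forall w, (size w <= 7)%N -> 60%:R * f w = cert_rhs f w.

Lemma functionalD c f g : functional c (sadd f g) = functional c f + functional c g.
Proof. by rewrite /functional -big_split; apply: eq_bigr => p _; rewrite mulrDr. Qed.

Lemma functionalZ a c f : functional c (sscale a f) = a * functional c f.
Proof. by rewrite /functional mulr_sumr; apply: eq_bigr => p _; rewrite mulrCA. Qed.

Lemma functional0 c : functional c (szero K) = 0.
Proof. by rewrite /functional big1 // => p _; rewrite mulr0. Qed.

Lemma functional_ofZ c f (F : word -> Z) :
  (forall w, f w = ofZ K (F w)) -> functional c f = ofZ K (zfunctional c F).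
Proof.
move=> fF; rewrite /zfunctional zsumE ofZ_sum big_map.
by apply: eq_bigr => p _; rewrite fF ofZM.
Qed.

Lemma functional_homogeneous c m n f :
  all (fun p => size p.1 == m) c -> m != n -> homogeneous n f -> functional c f = 0.
Proof.
move=> /allP cm ne_mn hf; rewrite /functional big1_seq // => p /andP[_ pc].
by rewrite hf ?mulr0 // (eqP (cm p pc)).
Qed.

Lemma cert_rhsD f g w : cert_rhs (sadd f g) w = cert_rhs f w + cert_rhs g w.
Proof.
rewrite /cert_rhs deltaD addrACA -!big_split.
by congr (_ + _); apply: eq_bigr => l _; rewrite functionalD mulrDl.
Qed.

Lemma cert_rhsZ a f w : cert_rhs (sscale a f) w = a * cert_rhs f w.
Proof.
rewrite /cert_rhs deltaZ mulrDr !mulr_sumr.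
by congr (_ + _); apply: eq_bigr => l _; rewrite functionalZ mulrA.
Qed.

Lemma cert_rhs0 w : cert_rhs (szero K) w = 0.
Proof. by rewrite /cert_rhs delta0 !big1 ?addr0 // => l _; rewrite functional0 mul0r. Qed.

Lemma cert_rhs_homogeneous n f : homogeneous n f -> homogeneous n (cert_rhs f).
Proof.
move=> hf w sw; rewrite /cert_rhs (big1_all targets_homogeneous); last first.
  move=> l lh; have [dn | dn] := eqVneq (term_deg (target_term l.1)) n.
    by rewrite eval_term_homogeneous ?mulr0 // dn.
  by rewrite (functional_homogeneous lh dn hf) mul0r.
rewrite (big1_all corrections_homogeneous) ?addr0 // => c ch.
have [dn | dn] := eqVneq (term_deg c.1) n.
  by rewrite eval_term_homogeneous ?mulr0 // dn.
by rewrite (functional_homogeneous ch dn (delta_homogeneous hf)) mul0r.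
Qed.

Lemma certified0 : certified (szero K).
Proof. by move=> w _; rewrite cert_rhs0 mulr0. Qed.

Lemma certifiedD f g : certified f -> certified g -> certified (sadd f g).
Proof. by move=> cf cg w sw; rewrite cert_rhsD -cf // -cg // -mulrDr. Qed.

Lemma certifiedZ a f : certified f -> certified (sscale a f).
Proof. by move=> cf w sw; rewrite cert_rhsZ -cf // mulrCA. Qed.

Lemma certified_span (T : series K -> Prop) f :
  (forall g, T g -> certified g) -> lin_span T f -> certified f.
Proof.
move=> Tcert; elim=> {f} [f /Tcert | | f g _ cf _ cg | a f _ cf] //.
- exact: certified0.
- exact: certifiedD.
- exact: certifiedZ.
Qed.

Lemma certified_homogeneous n f : homogeneous n f ->
  (forall w, size w = n -> (size w <= 7)%N -> 60%:R * f w = cert_rhs f w) -> certified f.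
Proof.
move=> hf cf w sw; have [wn | wn] := eqVneq (size w) n; first exact: cf.
by rewrite hf // (cert_rhs_homogeneous hf) // mulr0.
Qed.

Lemma ofZ_cert_denom : ofZ K cert_denom = 60%:R.
Proof. by []. Qed.

Lemma certified_eval_term t : zcertified t -> certified (eval_term letter t).
Proof.
move=> /allP tcert; apply: (certified_homogeneous (@eval_term_homogeneous K t)) => w sw _.
have /tcert/eqP/(congr1 (ofZ K)) : w \in words (term_deg t) by rewrite -sw mem_words.
rewrite ofZM ofZ_cert_denom -eval_term_coef => ->.
rewrite zsumE ofZ_sum map_cat big_cat !big_map /cert_rhs.
congr (_ + _); apply: eq_bigr => l _; rewrite ofZM -eval_term_coef.
  by rewrite (functional_ofZ _ (@eval_term_coef K t)).
by rewrite (functional_ofZ _ (@delta_eval_term K t)).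
Qed.

Lemma certified_lbr_word_xy u : certified (lbr_word (lbr (lx K) (ly K)) u).
Proof.
have -> : lbr_word (lbr (lx K) (ly K)) u = eval_term letter (left_normed_term false (true :: u)).
  by rewrite eval_left_normed_term.
have [le_u5 | lt5u] := leqP (size u) 5.
  apply: certified_eval_term.
  have /and3P[_ _ /allP] := zcertified_spanning_terms.
  by apply; rewrite mem_words_upto.
apply: (certified_homogeneous (@eval_term_homogeneous K _)) => w ->.
by rewrite term_deg_left_normed /= !ltnS leqNgt lt5u.
Qed.

Lemma freeLie_certified f : freeLie f -> certified f.
Proof.
move=> /lie_gen_span_left_normed; apply: certified_span => g /left_normed_letters.
move=> [a [[|b u] ->]].
  have /and3P[cx cy _] := zcertified_spanning_terms.
  by case: a; [move: cy | move: cx] => /certified_eval_term.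
rewrite /lbr_word /= -/(lbr_word _ u).
case: a b => [] [].
- by rewrite lbrxx lbr_word0; apply: certified0.
- by rewrite lbrC lbr_wordZ; apply/certifiedZ/certified_lbr_word_xy.
- exact: certified_lbr_word_xy.
- by rewrite lbrxx lbr_word0; apply: certified0.
Qed.

Lemma certified_ker_delta f : (60%:R : K) != 0 ->
  certified f -> delta f = szero K -> deg_le 7 f ->
  f = (fun w => \sum_(l <- targets)
                  (60%:R^-1 * functional l.2 f) * eval_term letter (target_term l.1) w).
Proof.
move=> n60 fcert df fdeg; apply: functional_extensionality => w.
have [le_w7 | lt7w] := leqP (size w) 7.
  apply: (mulfI n60); rewrite fcert // /cert_rhs df [X in _ + X]big1 ?addr0 => [|c _].
    by rewrite mulr_sumr; apply: eq_bigr => l _; rewrite !mulrA mulfV ?mul1r.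
  by rewrite functional0 mul0r.
rewrite fdeg // (big1_all targets_deg) // => l l7.
by rewrite eval_term_homogeneous ?mulr0 // neq_ltn (leq_ltn_trans l7 lt7w) orbT.
Qed.

End Certificate.

Theorem theorem5p8 (K : fieldType) (hK : [pchar K] =i pred0) (f : series K) :
  freeLie f -> delta f = szero K -> deg_le 7 f ->
  lie_gen (fun g => g = lx K \/ g = lbr (ly K) (lx K) \/
                    g = lbr (lbr (lbr (ly K) (lx K)) (ly K))
                            (lbr (lbr (ly K) (lx K)) (lx K))) f.
Proof.
move=> Lf df fdeg.
have n60 : (60%:R : K) != 0 by move/pcharf0P: hK => ->.
rewrite (certified_ker_delta n60 (freeLie_certified Lf) df fdeg).
apply: lie_gen_sum => l; rewrite /target_term eval_term_subst.
by apply: lie_gen_eval_term => -[] /=; [left | right; left | right; right].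
Qed.
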